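(* Let $\rho\colon\mathrm{Isom}(\mathbf H^1_{\mathbb C})_o\to\mathrm{Isom}(\mathbf H^\infty_{\mathbb C})_o$ be irreducible, with $\eta_1,\eta_2,E,\langle\cdot,\cdot\rangle$ as in the context, and let $\rho\colon P\to U(B)$ also denote a continuous homomorphic lift of $\rho|_P$ normalized so that $B(\rho(g(\lambda,b))\eta_1,\eta_2)>0$ for all $\lambda>0,b\in\mathbb R$. Then there is a continuous isomorphism $\chi\colon\mathbb R_{>0}\to\mathbb R_{>0}$ such that for all $\lambda>0$, $b\in\mathbb R$, with respect to $\mathbb C\eta_1\oplus\mathbb C\eta_2\oplus E$, $$\rho(g(\lambda,b))=\begin{pmatrix}\chi(\lambda)&-\chi(\lambda)|c(\lambda,b)|^2/2+i\Delta(\lambda,b)&-\chi(\lambda)\langle\pi(\lambda,b)(\cdot),c(\lambda,b)\rangle\\0&\chi(\lambda)^{-1}&0\\0&c(\lambda,b)&\pi(\lambda,b)\end{pmatrix},$$ where, writing $\Delta(b)=\Delta(1,b)$, $c(b)=c(1,b)$, $\pi(b)=\pi(1,b)$, for all $\lambda>0$, $b,d\in\mathbb R$: (1) $\Delta(\lambda,b)\in\mathbb R$ and $(\lambda,b)\mapsto\Delta(\lambda,b)$ is continuous; (2) $c(\lambda,b)\in E$ and $g(\lambda,b)\mapsto c(\lambda,b)$ is continuous; (3) $\pi(\lambda,b)$ is unitary on $E$ and $g(\lambda,b)\mapsto\pi(\lambda,b)$ is a strongly continuous unitary representation of $P$; (4) $c(b+d)=c(b)+\pi(b)c(d)$; (5)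 $\Delta(\lambda,0)=0$ and $c(\lambda,0)=0$; (6) $\chi(\lambda)\pi(\lambda,0)c(b)=c(\lambda^2b)$; (7) $\chi(\lambda)^2\Delta(b)=\Delta(\lambda^2b)$; (8) $\Delta(-b)=-\Delta(b)$; (9) $\mathrm{Im}\langle c(d),c(b)\rangle=\Delta(d-b)-\Delta(d)+\Delta(b)$; (10) $\mathrm{Re}\langle c(d),c(b)\rangle=-\tfrac{|c(d-b)|^2}{2}+\tfrac{|c(b)|^2}{2}+\tfrac{|c(d)|^2}{2}$.
   Context: $\mathcal H$ is a separable complex Hilbert space with a strongly non-degenerate Hermitian form $B$ (linear in the first variable) of signature $(1,\infty)$; $\mathbf H^\infty_{\mathbb C}=\{[v]:B(v,v)>0\}$, $\cosh d([v],[w])=|B(v,w)|/\sqrt{B(v,v)B(w,w)}$, boundary = isotropic lines, $\mathrm{Isom}(\mathbf H^\infty_{\mathbb C})_o=PU(B)$. $\mathbf H^1_{\mathbb C}$: $\mathbb C^2$ with $B(z,w)=z_1\bar w_1-z_2\bar w_2$, $\xi_1=(e_1+e_2)/\sqrt2$, $\xi_2=(e_1-e_2)/\sqrt2$; $g(\lambda,b)\in SU(1,1)$ has matrix $\begin{pmatrix}\lambda&ib\\0&\lambda^{-1}\end{pmatrix}$ in basis $(\xi_1,\xi_2)$, $P=\{g(\lambda,b):\lambda>0,b\in\mathbb R\}$, identified with its image in $PU(1,1)=\mathrm{Isom}(\mathbf H^1_{\mathbb C})_o$. Representations are orbitally continuous homomorphisms; irreducible = no fixed point in $\mathbf H^\infty_{\mathbb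 C}\cup\partial\mathbf H^\infty_{\mathbb C}$, no invariant pair of boundary points, and no proper invariant complex hyperbolic subspace (projectivization of a closed complex subspace of signature $(1,m')$). For such $\rho$, $\rho(P)$ fixes a unique $\eta_1\in\partial\mathbf H^\infty_{\mathbb C}$ and $\eta_2$ denotes the other endpoint of the common axis of the hyperbolic isometries $\rho(g(\lambda,0))$, $\lambda\ne1$; fix isotropic representatives (same names) with $B(\eta_1,\eta_2)=1$, let $E=\eta_1^\perp\cap\eta_2^\perp$, $\langle u,v\rangle:=B(u,v)$ for $u,v\in E$ and $|u|^2:=\langle u,u\rangle$. *)

From HB Require Import structures.
From mathcomp Require Import all_boot all_order all_algebra.
From mathcomp Require Import complex.
From mathcomp Require Import reals.
Set Implicit Arguments. Unset Strict Implicit. Unset Printing Implicit Defensive.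
Import Order.TTheory GRing.Theory Num.Theory.
Local Open Scope ring_scope.
Local Open Scope complex_scope.

Definition iC {R : realType} : R[i] := complex.Complex 0 1.

Section HermitianSpace.
Variable R : realType.
Local Notation C := R[i].
Variable V : lmodType C.

Definition hermitian_form (B : V -> V -> C) : Prop :=
  (forall (a : C) (u v w : V), B (a *: u + v) w = a * B u w + B v w) /\
  (forall u w : V, B w u = (B u w)^*).

Variable B : V -> V -> C.


Definition cabs (z : C) : R := Num.sqrt (complex.Re z ^+ 2 + complex.Im z ^+ 2).

Definition sqB (v : V) : R := complex.Re (B v v).

(** Given a vector e with B(e,e)=1, the Hilbert (squared) norm
    |B(v,e)|^2 - B(w,w) where v = B(v,e) e + w, w in e^perp;
    this equals 2|B(v,e)|^2 - B(v,v).  It defines the topology of H. *)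
Definition norm2 (e v : V) : R := 2 * (cabs (B v e)) ^+ 2 - sqB v.

Definition converges (e : V) (u : nat -> V) (v : V) : Prop :=
  forall eps : R, 0 < eps -> exists N : nat, forall n, (N <= n)%N ->
    norm2 e (u n - v) < eps.

Definition cauchy (e : V) (u : nat -> V) : Prop :=
  forall eps : R, 0 < eps -> exists N : nat, forall n m, (N <= n)%N -> (N <= m)%N ->
    norm2 e (u n - u m) < eps.

(** (H,B) is a separable complex Hilbert space with a strongly non-degenerate
    Hermitian form of signature (1,infinity): H = C e (+) e^perp with
    B(e,e) = 1, -B positive definite and complete on e^perp, e^perp of
    infinite (countable) dimension, H separable. *)
Definition strongly_nondeg_sig_1_inf (e : V) : Prop :=
  [/\ B e e = 1,
      (forall w, B w e = 0 -> w <> 0 -> sqB w < 0),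
      (forall u : nat -> V, cauchy e u -> exists v, converges e u v),
      (exists s : nat -> V, forall v (eps : R), 0 < eps ->
          exists n, norm2 e (v - s n) < eps) &
      (forall n : nat, exists w : 'I_n -> V,
          (forall i, B (w i) e = 0) /\
          (forall i j, B (w i) (w j) = if i == j then -1 else 0))].

Definition unitaryB (T : V -> V) : Prop :=
  [/\ (forall (a : C) u v, T (a *: u + v) = a *: T u + T v),
      bijective T &
      (forall u v, B (T u) (T v) = B u v)].

Definition unitaryB_on (E : V -> Prop) (T : V -> V) : Prop :=
  [/\ (forall u, E u -> E (T u)),
      (forall (a : C) u v, E u -> E v -> T (a *: u + v) = a *: T u + T v),
      (forall u v, E u -> E v -> B (T u) (T v) = B u v) &
      (forall v, E v -> exists2 u, E u & T u = v)].

(** [x] = [y] as points of the projective space *)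
Definition same_line (x y : V) : Prop := exists mu : C, x = mu *: y.

Definition isotropic (x : V) : Prop := x <> 0 /\ B x x = 0.

(** square of cosh of the hyperbolic distance between [v] and [w] *)
Definition cosh2_dist (v w : V) : R := (cabs (B v w)) ^+ 2 / (sqB v * sqB w).

Definition Jmx : 'M[C]_2 := \matrix_(i < 2, j < 2)
  (if i == j then (if (i : nat) == 0%N then 1 else -1) else 0).

Definition adjmx (g : 'M[C]_2) : 'M[C]_2 := (map_mx (@conjc R) g)^T.

Definition SU11 (g : 'M[C]_2) : Prop := adjmx g *m Jmx *m g = Jmx /\ \det g = 1.

Definition mx22 (a b c d : C) : 'M[C]_2 := \matrix_(i < 2, j < 2)
  (if (i : nat) == 0%N then (if (j : nat) == 0%N then a else b)
   else (if (j : nat) == 0%N then c else d)).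

(** change of basis: columns xi_1 = (e1+e2)/sqrt2, xi_2 = (e1-e2)/sqrt2 ;
    it is its own inverse *)
Definition Xi : 'M[C]_2 :=
  ((Num.sqrt (2 : R))^-1)%:C *: mx22 1 1 1 (-1).

(** g(lambda,b): matrix (lambda, i b ; 0, lambda^-1) in the basis (xi_1, xi_2),
    written in the standard basis (e1, e2). *)
Definition gP (l b : R) : 'M[C]_2 :=
  Xi *m mx22 l%:C (iC * b%:C) 0 (l^-1)%:C *m Xi.

(** A homomorphism PU(1,1) = SU(1,1)/{+-1} -> PU(B) = U(B)/S^1, given by a
    choice of unitaryB lifts [rho g] (g in SU(1,1)), which is orbitally
    continuous for the hyperbolic metric. *)
Definition proj_rep (rho : 'M[C]_2 -> V -> V) : Prop :=
  [/\ (forall g, SU11 g -> unitaryB (rho g)),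
      (forall g h, SU11 g -> SU11 h -> exists2 mu : C, cabs mu = 1 &
          forall v, rho (g *m h) v = mu *: rho g (rho h v)),
      (exists2 mu : C, cabs mu = 1 & forall v, rho (-1)%:M v = mu *: v) &
      (forall v, 0 < sqB v -> forall g0, SU11 g0 -> forall eps : R, 0 < eps ->
          exists2 d : R, 0 < d & forall g, SU11 g ->
            (forall i j, cabs (g i j - g0 i j) < d) ->
            cosh2_dist (rho g v) (rho g0 v) < 1 + eps)].

Definition subspaceP (W : V -> Prop) : Prop :=
  W 0 /\ forall (a : C) u v, W u -> W v -> W (a *: u + v).

Definition closed_in (e : V) (W : V -> Prop) : Prop :=
  forall u v, (forall n, W (u n)) -> converges e u v -> W v.

(** closed complex subspaceP of signature (1,m') (some m'):
    W = C p (+) (W cap p^perp), B(p,p) > 0, B negative definite on W cap p^perp *)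
Definition hyp_subspace (e : V) (W : V -> Prop) : Prop :=
  [/\ subspaceP W, closed_in e W &
      exists p, [/\ W p, 0 < sqB p &
                    forall w, W w -> B w p = 0 -> w <> 0 -> sqB w < 0]].

Definition irreducible_rep (e : V) (rho : 'M[C]_2 -> V -> V) : Prop :=
  [/\ (* no fixed point in H^oo or its boundary *)
      ~ (exists v, [/\ v <> 0, 0 <= sqB v &
            forall g, SU11 g -> same_line (rho g v) v]),
      (* no invariant pair of boundary points *)
      ~ (exists v w, [/\ isotropic v, isotropic w, ~ same_line w v &
            forall g, SU11 g ->
              (same_line (rho g v) v /\ same_line (rho g w) w) \/
              (same_line (rho g v) w /\ same_line (rho g w) v)]) &
      (* no proper invariant complex hyperbolic subspaceP *)
      ~ (exists W : V -> Prop, [/\ hyp_subspace e W, (exists v, ~ W v) &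
            forall g, SU11 g -> forall w, W w -> W (rho g w)])].

(** T (a lift of) a hyperbolic isometry whose axis has endpoints [x], [y]:
    T fixes [x], [y] and translates the geodesic between them by a nonzero
    amount (T x = a x with |a| <> 1). *)
Definition hyperbolic_axis (T : V -> V) (x y : V) : Prop :=
  [/\ isotropic x, isotropic y, ~ same_line y x, same_line (T y) y &
      exists2 a : C, T x = a *: x & cabs a != 1].

Definition contP_V (e : V) (f : R -> R -> V) : Prop :=
  forall l0 b0 : R, 0 < l0 -> forall eps : R, 0 < eps ->
    exists2 d : R, 0 < d & forall l b : R, 0 < l ->
      `|l - l0| < d -> `|b - b0| < d -> norm2 e (f l b - f l0 b0) < eps.

End HermitianSpace.

Definition contP_R (R : realType) (f : R -> R -> R) : Prop :=
  forall l0 b0 : R, 0 < l0 -> forall eps : R, 0 < eps ->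
    exists2 d : R, 0 < d & forall l b : R, 0 < l ->
      `|l - l0| < d -> `|b - b0| < d -> `|f l b - f l0 b0| < eps.

Definition cont_iso_pos (R : realType) (chi : R -> R) : Prop :=
  [/\ (forall x, 0 < x -> 0 < chi x),
      (forall x y, 0 < x -> 0 < y -> chi (x * y) = chi x * chi y),
      (forall x y, 0 < x -> 0 < y -> chi x = chi y -> x = y),
      (forall y, 0 < y -> exists2 x, 0 < x & chi x = y) &
      (forall x0, 0 < x0 -> forall eps : R, 0 < eps -> exists2 d : R, 0 < d &
          forall x, 0 < x -> `|x - x0| < d -> `|chi x - chi x0| < eps)].

(* Since rho(P) fixes [eta1], each lift L(l,b) maps eta1 to kappa(l,b) eta1 with
   kappa(l,b) = B(L(l,b) eta1, eta2); the normalization makes kappa a positive character of P.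
   It is trivial on the unipotent elements g(1,b), since g(sqrt 2,0) conjugates g(1,b) to g(1,2b),
   so kappa(l,b) = chi(l) for a continuous homomorphism chi of R_{>0}; chi is not trivial because
   rho(g(l,0)) is hyperbolic, hence onto by the intermediate value theorem.
   In the splitting C eta1 + C eta2 + E, unitarity of L(l,b) forces the triangular shape of the
   matrix, c and pi being the E-components of L eta2 and of L on E, and the isotropy of L eta2
   gives the real part of the corner entry. Identities (4)-(10) are the components of
   L(g g') = L(g) L(g') for the factorizations g(1,b+d) = g(1,b) g(1,d) and
   g(l,l b) = g(l,0) g(1,b) = g(1,l^2 b) g(l,0). Continuity holds because B(-,w) and the
   projection onto E are bounded for the Hilbert norm defined by e. *)

From HB Require Import structures.
From mathcomp Require Import all_boot all_order all_algebra.
From mathcomp Require Import complex.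
From mathcomp Require Import reals.
From mathcomp Require Import classical_sets topology normedtype.
From mathcomp Require Import ring lra.
Set Implicit Arguments. Unset Strict Implicit. Unset Printing Implicit Defensive.
Import Order.TTheory GRing.Theory Num.Theory.
Import numFieldNormedType.Exports.
Local Open Scope ring_scope.
Local Open Scope complex_scope.

Section ComplexModulus.
Variable R : realType.
Implicit Types (x : R) (z w : R[i]).

Lemma sqr_cabs z : cabs z ^+ 2 = complex.Re z ^+ 2 + complex.Im z ^+ 2.
Proof. by rewrite sqr_sqrtr // addr_ge0 ?sqr_ge0. Qed.

Lemma cabs_normc z : cabs z = Normc.normc z.
Proof. by case: z. Qed.

Lemma cabs1 : cabs (1 : R[i]) = 1.
Proof. by rewrite cabs_normc Normc.normc1. Qed.

Lemma cabsM z w : cabs (z * w) = cabs z * cabs w.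
Proof. by rewrite !cabs_normc Normc.normcM. Qed.

(* Inside ring operations [z^*] parses as [Num.conj z], which does not match [conjc z]
   syntactically; hence [conjc] is written out in such statements. *)
Lemma mulcJ z : z * conjc z = (cabs z ^+ 2)%:C.
Proof.
by rewrite sqr_cabs; case: z => a b; simpc; rewrite /= !expr2 [b * a]mulrC addNr.
Qed.

Lemma cabsMn z n : cabs (z *+ n) = cabs z *+ n.
Proof. by rewrite !cabs_normc normcMn. Qed.

Lemma cabsJ z : cabs (conjc z) = cabs z.
Proof. by case: z => a b; rewrite /cabs /= sqrrN. Qed.

Lemma Re_conjc z : complex.Re (conjc z) = complex.Re z.
Proof. by case: z. Qed.

Lemma sqr_Re_le_cabs z : complex.Re z ^+ 2 <= cabs z ^+ 2.
Proof. by rewrite sqr_cabs lerDl sqr_ge0. Qed.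

Lemma sqr_Im_le_cabs z : complex.Im z ^+ 2 <= cabs z ^+ 2.
Proof. by rewrite sqr_cabs lerDr sqr_ge0. Qed.

Lemma sqr_cabsB_le z w : cabs (z - w) ^+ 2 <= 2 * cabs z ^+ 2 + 2 * cabs w ^+ 2.
Proof.
rewrite !sqr_cabs; case: z w => [a b] [c d] /=.
have := sqr_ge0 (a + c); have := sqr_ge0 (b + d); nra.
Qed.

Lemma conjcM_real x z : conjc (x%:C * z) = x%:C * conjc z.
Proof. by case: z => a b; simpc. Qed.

Lemma Re_realM x z : complex.Re (x%:C * z) = x * complex.Re z.
Proof. by case: z => a b; simpc. Qed.

Lemma Im_realM x z : complex.Im (x%:C * z) = x * complex.Im z.
Proof. by case: z => a b; simpc. Qed.

End ComplexModulus.

Section HermitianForm.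
Variables (R : realType) (V : lmodType R[i]) (h : V -> V -> R[i]).
Hypothesis hh : hermitian_form h.
Implicit Types (a : R[i]) (u v w : V).

Lemma hermDl u v w : h (u + v) w = h u w + h v w.
Proof. by have := proj1 hh 1 u v w; rewrite scale1r mul1r. Qed.

Lemma herm0l w : h 0 w = 0.
Proof. by apply: (addIr (h 0 w)); rewrite -hermDl !add0r. Qed.

Lemma hermZl a u w : h (a *: u) w = a * h u w.
Proof. by rewrite -[a *: u]addr0 (proj1 hh) herm0l addr0. Qed.

Lemma hermNl u w : h (- u) w = - h u w.
Proof. by rewrite -scaleN1r hermZl mulN1r. Qed.

Lemma hermBl u v w : h (u - v) w = h u w - h v w.
Proof. by rewrite hermDl hermNl. Qed.

Lemma herm_sym u w : h w u = conjc (h u w).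
Proof. exact: (proj2 hh). Qed.

Lemma hermDr u v w : h w (u + v) = h w u + h w v.
Proof. by rewrite herm_sym hermDl rmorphD /= -!herm_sym. Qed.

Lemma hermZr a u w : h w (a *: u) = conjc a * h w u.
Proof. by rewrite herm_sym hermZl rmorphM /= -herm_sym. Qed.

Lemma herm0r w : h w 0 = 0.
Proof. by rewrite herm_sym herm0l rmorph0. Qed.

Lemma hermNr u w : h w (- u) = - h w u.
Proof. by rewrite herm_sym hermNl rmorphN /= -herm_sym. Qed.

Lemma hermBr u v w : h w (u - v) = h w u - h w v.
Proof. by rewrite hermDr hermNr. Qed.

Lemma Im_herm_diag v : complex.Im (h v v) = 0.
Proof. by have := herm_sym v v; case: (h v v) => a b [] /=; lra. Qed.

End HermitianForm.

Lemma quadratic_ge0_le (R : realFieldType) (A N K : R) : 0 <= N -> 0 <= K ->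
  (forall t, 0 <= A - 2 * t * N + t ^+ 2 * N * K) -> N <= A * K.
Proof.
move=> N_ge0 K_ge0 q_ge0; have [K0|K_neq0] := eqVneq K 0.
  rewrite K0 mulr0; have [->//|N_neq0] := eqVneq N 0.
  have := q_ge0 ((A + 1) / (2 * N)); rewrite K0 mulr0 addr0.
  have -> : 2 * ((A + 1) / (2 * N)) * N = A + 1 by field; rewrite N_neq0.
  lra.
have K_gt0 : 0 < K by rewrite lt0r K_neq0.
have := q_ge0 K^-1.
have -> : A - 2 * K^-1 * N + K^-1 ^+ 2 * N * K = A - N / K by field.
by rewrite subr_ge0 ler_pdivrMr.
Qed.

Lemma herm_CauchySchwarz (R : realType) (V : lmodType R[i]) (h : V -> V -> R[i]) :
  hermitian_form h -> (forall v, 0 <= complex.Re (h v v)) ->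
  forall x y, cabs (h x y) ^+ 2 <= complex.Re (h x x) * complex.Re (h y y).
Proof.
move=> hh h_pos x y; apply: quadratic_ge0_le => [||t]; rewrite ?sqr_ge0 ?h_pos //.
set z := h x y; set N := cabs z ^+ 2; have zN : z * conjc z = N%:C := mulcJ z.
clearbody N; have := h_pos (x - (t%:C * z) *: y).
have -> : h (x - (t%:C * z) *: y) (x - (t%:C * z) *: y) =
    h x x - (2 * t * N)%:C + (t ^+ 2 * N)%:C * h y y.
  rewrite (hermBl hh) !(hermBr hh) !(hermZl hh) !(hermZr hh) (herm_sym hh x y) -/z.
  by rewrite conjcM_real !rmorphM rmorph_nat /= -zN; ring.
by rewrite !raddfD /= Re_realM.
Qed.

Section HilbertNorm.
Variables (R : realType) (V : lmodType R[i]) (B : V -> V -> R[i]) (e : V).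
Hypotheses (hB : hermitian_form B) (Bee : B e e = 1)
  (Bneg : forall w, B w e = 0 -> w <> 0 -> sqB B w < 0).
Implicit Types (a : R[i]) (u v w x y : V).

Definition hilbert_form v w := (B v e * conjc (B w e)) *+ 2 - B v w.

Lemma hilbert_form_herm : hermitian_form hilbert_form.
Proof.
split=> [a u v w|u w]; rewrite /hilbert_form.
  by rewrite !(hermDl hB) !(hermZl hB); ring.
by rewrite rmorphB rmorphMn rmorphM /= -(herm_sym hB u w) conjcK mulrC.
Qed.

Lemma norm2E v : norm2 B e v = complex.Re (hilbert_form v v).
Proof. by rewrite /hilbert_form mulcJ raddfB raddfMn /= /norm2 mulr_natl. Qed.

Lemma cabs_le_norm2 v : cabs (B v e) ^+ 2 <= norm2 B e v.
Proof.
set a := B v e.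
have [w we v_eq] : exists2 w, B w e = 0 & v = a *: e + w.
  exists (v - a *: e); last by rewrite addrC subrK.
  by rewrite (hermBl hB) (hermZl hB) Bee mulr1 subrr.
have Bvv : B v v = (cabs a ^+ 2)%:C + B w w.
  rewrite {1 2}v_eq !(hermDl hB) !(hermDr hB) !(hermZl hB) !(hermZr hB).
  by rewrite (herm_sym hB w e) we Bee -mulcJ; simpc; ring.
have Bww : complex.Re (B w w) <= 0.
  have [->|w_neq0] := eqVneq w 0; first by rewrite (herm0l hB).
  by apply/ltW/Bneg => //; apply/eqP.
rewrite /norm2 /sqB Bvv raddfD /= -/a; lra.
Qed.

Lemma norm2_ge0 v : 0 <= norm2 B e v.
Proof. exact: le_trans (sqr_ge0 _) (cabs_le_norm2 v). Qed.

Lemma norm2Z a v : norm2 B e (a *: v) = cabs a ^+ 2 * norm2 B e v.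
Proof.
rewrite !norm2E (hermZl hilbert_form_herm) (hermZr hilbert_form_herm).
by rewrite mulrA mulcJ Re_realM.
Qed.

Lemma norm2B_le x y : norm2 B e (x - y) <= 2 * norm2 B e x + 2 * norm2 B e y.
Proof.
have := norm2_ge0 (x + y); rewrite !norm2E.
have hf := hilbert_form_herm.
rewrite (hermBl hf) !(hermBr hf) (hermDl hf) !(hermDr hf) !raddfD /=; lra.
Qed.

Lemma herm_bounded y :
  exists2 K, 0 < K & forall x, cabs (B x y) ^+ 2 <= K * norm2 B e x.
Proof.
exists (8 * cabs (B y e) ^+ 2 + 2 * norm2 B e y + 1) => [|x].
  by have := sqr_ge0 (cabs (B y e)); have := norm2_ge0 y; lra.
have -> : B x y = (B x e * conjc (B y e)) *+ 2 - hilbert_form x y.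
  by rewrite /hilbert_form opprB addrC subrK.
apply: le_trans (sqr_cabsB_le _ _) _.
have CS : cabs (hilbert_form x y) ^+ 2 <= norm2 B e x * norm2 B e y.
  rewrite !norm2E; apply: herm_CauchySchwarz hilbert_form_herm _ x y => v.
  by rewrite -norm2E norm2_ge0.
have := cabs_le_norm2 x; have := norm2_ge0 x; have := norm2_ge0 y.
have := sqr_ge0 (cabs (B y e)).
rewrite cabsMn cabsM cabsJ; nra.
Qed.

Lemma contP_V_lipschitz (T : V -> V) (K : R) : 0 < K ->
  (forall x y, norm2 B e (T x - T y) <= K * norm2 B e (x - y)) ->
  forall f, contP_V B e f -> contP_V B e (fun l b => T (f l b)).
Proof.
move=> K_gt0 T_lip f f_cont l0 b0 l0_gt0 eps eps_gt0.
have [d d_gt0 f_near] := f_cont l0 b0 l0_gt0 (eps / K) (divr_gt0 eps_gt0 K_gt0).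
exists d => // l b l_gt0 near_l near_b; apply: le_lt_trans (T_lip _ _) _.
by rewrite -ltr_pdivlMl // mulrC f_near.
Qed.

Lemma contP_R_lipschitz (P : V -> R) (K : R) : 0 < K ->
  (forall x y, (P x - P y) ^+ 2 <= K * norm2 B e (x - y)) ->
  forall f, contP_V B e f -> contP_R (fun l b => P (f l b)).
Proof.
move=> K_gt0 P_lip f f_cont l0 b0 l0_gt0 eps eps_gt0.
have eps2_gt0 : 0 < eps ^+ 2 / K by rewrite divr_gt0 ?exprn_gt0.
have [d d_gt0 f_near] := f_cont l0 b0 l0_gt0 _ eps2_gt0.
exists d => // l b l_gt0 near_l near_b.
have : (P (f l b) - P (f l0 b0)) ^+ 2 < eps ^+ 2.
  by apply: le_lt_trans (P_lip _ _) _; rewrite -ltr_pdivlMl // mulrC f_near.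
by rewrite -real_normK ?num_real // (ltr_pXn2r _ (normr_ge0 _) (ltW eps_gt0)).
Qed.

Lemma contP_Re_herm w f :
  contP_V B e f -> contP_R (fun l b => complex.Re (B (f l b) w)).
Proof.
have [K K_gt0 Bw_bounded] := herm_bounded w.
apply: (contP_R_lipschitz (P := fun x => _ (B x w)) K_gt0) => x y.
by rewrite -raddfB /= -(hermBl hB); apply: le_trans (sqr_Re_le_cabs _) (Bw_bounded _).
Qed.

Lemma contP_Im_herm w f :
  contP_V B e f -> contP_R (fun l b => complex.Im (B (f l b) w)).
Proof.
have [K K_gt0 Bw_bounded] := herm_bounded w.
apply: (contP_R_lipschitz (P := fun x => _ (B x w)) K_gt0) => x y.
by rewrite -raddfB /= -(hermBl hB); apply: le_trans (sqr_Im_le_cabs _) (Bw_bounded _).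
Qed.

End HilbertNorm.

Section PositiveReals.
Variable R : realType.
Local Open Scope classical_set_scope.

Definition cont_pos (f : R -> R) := forall x0, 0 < x0 -> forall eps : R, 0 < eps ->
  exists2 d : R, 0 < d & forall x, 0 < x -> `|x - x0| < d -> `|f x - f x0| < eps.

Lemma cont_pos_continuous f x : cont_pos f -> 0 < x -> {for x, continuous f}.
Proof.
move=> f_cont x_gt0; apply/cvgrPdist_lt => eps eps_gt0.
have [d d_gt0 f_near] := f_cont x x_gt0 eps eps_gt0.
apply/nbhs_normP; exists (Num.min d x) => /=; first by rewrite lt_min d_gt0.
move=> y /=; rewrite lt_min => /andP[y_near y_pos].
rewrite distrC f_near 1?distrC //.
by have := ler_norm (x - y); lra.
Qed.

Lemma cont_pos_IVT f u v y : cont_pos f -> 0 < u -> 0 < v ->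
  f u <= y <= f v -> exists2 x, 0 < x & f x = y.
Proof.
move=> f_cont u_gt0 v_gt0 y_between.
have min_le_max : Num.min u v <= Num.max u v by rewrite ge_min le_max lexx.
have f_within : {within `[Num.min u v, Num.max u v], continuous f}.
  apply: continuous_in_subspaceT => x.
  rewrite inE /= in_itv /= ge_min => /andP[x_ge _].
  by apply: cont_pos_continuous => //; case/orP: x_ge; apply: lt_le_trans.
have y_in : Num.min (f (Num.min u v)) (f (Num.max u v)) <= y <=
            Num.max (f (Num.min u v)) (f (Num.max u v)).
  by case: (leP u v) y_between => _ /andP[]; rewrite ge_min le_max => -> ->; rewrite ?orbT.
have [x x_in fx] := IVT min_le_max f_within y_in.
exists x => //; move: x_in; rewrite in_itv /= ge_min => /andP[+ _].
by case/orP; apply: lt_le_trans.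
Qed.

Lemma expr_unbounded (q M : R) : 1 < q -> exists n, M < q ^+ n.
Proof.
move=> q_gt1.
have Bernoulli n : 1 + n%:R * (q - 1) <= q ^+ n.
  elim: n => [|n IHn]; first by rewrite mul0r addr0 expr0.
  have : q * (1 + n%:R * (q - 1)) <= q * q ^+ n by rewrite ler_wpM2l //; lra.
  have : 0 <= n%:R * (q - 1) by rewrite mulr_ge0 ?ler0n //; lra.
  by rewrite exprS -natr1; nra.
have q1_gt0 : 0 < q - 1 by rewrite subr_gt0.
have := archi_boundP (divr_ge0 (normr_ge0 M) (ltW q1_gt0)).
set n := Num.Def.archi_bound _ => n_big; exists n.
have := Bernoulli n; have := ler_norm M.
by rewrite ltr_pdivrMr // in n_big; lra.
Qed.

Lemma cont_pos_hom_onto (chi : R -> R) :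
  (forall x, 0 < x -> 0 < chi x) ->
  (forall x y, 0 < x -> 0 < y -> chi (x * y) = chi x * chi y) ->
  cont_pos chi -> forall t, 0 < t -> chi t != 1 ->
  forall y, 0 < y -> exists2 x, 0 < x & chi x = y.
Proof.
move=> chi_gt0 chiM chi_cont t t_gt0 chit_neq1 y y_gt0.
have chi1 : chi 1 = 1.
  by apply: (mulfI (lt0r_neq0 (chi_gt0 1 ltr01))); rewrite -chiM ?mulr1.
have chiV x : 0 < x -> chi x^-1 = (chi x)^-1.
  move=> x_gt0; apply: (mulfI (lt0r_neq0 (chi_gt0 x x_gt0))).
  by rewrite -chiM ?invr_gt0 // !divff ?lt0r_neq0 ?chi_gt0.
have [s s_gt0 chis_gt1] : exists2 s, 0 < s & 1 < chi s.
  case: (ltgtP (chi t) 1) chit_neq1 => // [chit_lt1|chit_gt1] _; last by exists t.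
  by exists t^-1; rewrite ?invr_gt0 // chiV // invf_gt1 ?chi_gt0.
have chiX n : chi (s ^+ n) = chi s ^+ n.
  by elim: n => [|n IHn]; rewrite ?expr0 // !exprS chiM ?exprn_gt0 // IHn.
have [n chisn_big] := expr_unbounded (y + y^-1) chis_gt1.
have sn_gt0 : 0 < s ^+ n := exprn_gt0 n s_gt0.
have chisn_gt0 : 0 < chi s ^+ n by rewrite -chiX chi_gt0.
have yV_gt0 : 0 < y^-1 by rewrite invr_gt0.
apply: (cont_pos_IVT chi_cont (u := (s ^+ n)^-1) (v := s ^+ n)); rewrite ?invr_gt0 //.
rewrite chiV // chiX invf_ple ?posrE //; apply/andP; split; lra.
Qed.

End PositiveReals.

Section UpperTriangularGroup.
Variable R : realType.

Lemma mx22M (a b c d a' b' c' d' : R[i]) : mx22 a b c d *m mx22 a' b' c' d' =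
  mx22 (a * a' + b * c') (a * b' + b * d') (c * a' + d * c') (c * b' + d * d').
Proof.
apply/matrixP => i j; rewrite !mxE !big_ord_recr big_ord0 /= !mxE add0r.
by case: i => [[|[|i]] hi]; case: j => [[|[|j]] hj].
Qed.

Lemma Xi_involutive : Xi R *m Xi R = 1%:M.
Proof.
rewrite /Xi -scalemxAl -scalemxAr scalerA mx22M.
have s2 : (Num.sqrt (2 : R))^-1 * (Num.sqrt 2)^-1 * 2 = 1.
  by rewrite -invfM -expr2 sqr_sqrtr ?mulVf ?pnatr_eq0 ?ler0n.
apply/matrixP => i j; rewrite !mxE.
case: i => [[|[|i]] hi]; case: j => [[|[|j]] hj] //=; apply/eqP; rewrite eq_complex /=;
  apply/andP; split; apply/eqP; rewrite ?mulr0 ?mul0r ?addr0 ?subr0; lra.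
Qed.

Lemma gP_mul (l b l' b' : R) : l != 0 -> l' != 0 ->
  gP l b *m gP l' b' = gP (l * l') (l * b' + b / l').
Proof.
move=> l_neq0 l'_neq0; rewrite /gP !mulmxA -[Xi R *m _ *m Xi R *m Xi R]mulmxA.
rewrite Xi_involutive mulmx1 -[Xi R *m _ *m mx22 _ _ _ _]mulmxA mx22M.
congr (_ *m _ *m _); apply/matrixP => i j; rewrite !mxE.
case: i => [[|[|i]] hi]; case: j => [[|[|j]] hj] //=; apply/eqP; rewrite eq_complex /=;
  apply/andP; split; apply/eqP; rewrite ?mulr0 ?mul0r ?addr0 ?subr0 ?add0r //;
  by field; rewrite ?l_neq0 ?l'_neq0.
Qed.

End UpperTriangularGroup.

Section UnitaryOperator.
Variables (R : realType) (V : lmodType R[i]) (B : V -> V -> R[i]) (T : V -> V).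
Hypothesis hT : unitaryB B T.
Implicit Types (a : R[i]) (u v : V).

Lemma unitaryD u v : T (u + v) = T u + T v.
Proof. by case: hT => lin _ _; have := lin 1 u v; rewrite !scale1r. Qed.

Lemma unitary0 : T 0 = 0.
Proof. by apply: (addIr (T 0)); rewrite -unitaryD !add0r. Qed.

Lemma unitaryZ a u : T (a *: u) = a *: T u.
Proof. by case: hT => lin _ _; rewrite -[a *: u]addr0 lin unitary0 addr0. Qed.

Lemma unitaryN u : T (- u) = - T u.
Proof. by rewrite -scaleN1r unitaryZ scaleN1r. Qed.

Lemma unitary_herm u v : B (T u) (T v) = B u v.
Proof. by case: hT => _ _ ->. Qed.

End UnitaryOperator.

Section HyperbolicPair.
Variables (R : realType) (V : lmodType R[i]) (B : V -> V -> R[i]) (eta1 eta2 : V).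
Hypotheses (hB : hermitian_form B) (B11 : B eta1 eta1 = 0) (B22 : B eta2 eta2 = 0)
  (B12 : B eta1 eta2 = 1).
Implicit Types (a : R[i]) (u v w : V).

Definition orthE u := B u eta1 = 0 /\ B u eta2 = 0.

Definition projE v := v - B v eta2 *: eta1 - B v eta1 *: eta2.

Lemma B21 : B eta2 eta1 = 1.
Proof. by rewrite (herm_sym hB) B12 rmorph1. Qed.

Lemma projE_orthE v : orthE (projE v).
Proof.
by split; rewrite !(hermBl hB) !(hermZl hB) ?B11 ?B22 ?B12 ?B21 mulr0 mulr1 subr0 subrr.
Qed.

Lemma projE_id u : orthE u -> projE u = u.
Proof. by case=> u1 u2; rewrite /projE u1 u2 !scale0r !subr0. Qed.

Lemma projEZ a v : projE (a *: v) = a *: projE v.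
Proof. by rewrite /projE !(hermZl hB) -!scalerA -!scalerBr. Qed.

Lemma projED u v : projE (u + v) = projE u + projE v.
Proof.
rewrite /projE !(hermDl hB) !scalerDl !opprD !addrA.
set x1 := _ *: eta1; set y1 := _ *: eta1; set x2 := _ *: eta2; set y2 := _ *: eta2.
by rewrite [u - x1 - x2 + v]addrC !addrA [v + u]addrC [u + v - x1 - x2 - y1]addrAC.
Qed.

Lemma projEN v : projE (- v) = - projE v.
Proof. by rewrite -scaleN1r projEZ scaleN1r. Qed.

Lemma projE0 : projE 0 = 0.
Proof. by rewrite /projE !(herm0l hB) !scale0r !subr0. Qed.

Lemma projE_eta1 : projE eta1 = 0.
Proof. by rewrite /projE B12 B11 scale1r scale0r !subr0 subrr. Qed.

Lemma projE_eta2 : projE eta2 = 0.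
Proof. by rewrite /projE B22 B21 scale1r scale0r subr0 subrr. Qed.

Lemma vec_decomp v : v = B v eta2 *: eta1 + B v eta1 *: eta2 + projE v.
Proof. by rewrite /projE addrC addrA [_ - _ - _ + _]addrAC !subrK. Qed.

Lemma herm_decomp v w :
  B v w = B v eta2 * conjc (B w eta1) + B v eta1 * conjc (B w eta2) + B (projE v) (projE w).
Proof.
have [pv1 pv2] := projE_orthE v; have [pw1 pw2] := projE_orthE w.
rewrite {1}[v]vec_decomp {1}[w]vec_decomp.
move: (projE v) (projE w) pv1 pv2 pw1 pw2 => pv pw pv1 pv2 pw1 pw2.
rewrite !(hermDl hB) !(hermDr hB) !(hermZl hB) !(hermZr hB) B11 B22 B21 B12.
by rewrite ![B eta1 _](herm_sym hB) ![B eta2 _](herm_sym hB) pv1 pv2 pw1 pw2 !rmorph0; ring.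
Qed.

End HyperbolicPair.

Section LiftOfP.
Variables (R : realType) (V : lmodType R[i]) (B : V -> V -> R[i]) (e : V).
Hypotheses (hB : hermitian_form B) (hsig : strongly_nondeg_sig_1_inf B e).
Variables (rho : 'M[R[i]]_2 -> V -> V) (eta1 eta2 : V).
Hypotheses (heta1 : isotropic B eta1)
  (hfix1 : forall l b : R, 0 < l -> same_line (rho (gP l b) eta1) eta1)
  (haxis : forall l : R, 0 < l -> l != 1 -> hyperbolic_axis B (rho (gP l 0)) eta1 eta2)
  (B12 : B eta1 eta2 = 1).
Variable L : R -> R -> V -> V.
Hypotheses (hLU : forall l b : R, 0 < l -> unitaryB B (L l b))
  (hLhom : forall l b l' b' l'' b'' : R, 0 < l -> 0 < l' -> 0 < l'' ->
     gP l b *m gP l' b' = gP l'' b'' -> forall v, L l'' b'' v = L l b (L l' b' v))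
  (hLlift : forall l b : R, 0 < l -> exists2 mu : R[i], cabs mu = 1 &
     forall v, L l b v = mu *: rho (gP l b) v)
  (hLcont : forall v, contP_V B e (fun l b => L l b v))
  (hLnorm : forall l b : R, 0 < l -> 0 < B (L l b eta1) eta2).
Implicit Types (l b : R) (u v : V).

Lemma B11 : B eta1 eta1 = 0.
Proof. by case: heta1. Qed.

Lemma B22 : B eta2 eta2 = 0.
Proof.
have two_neq1 : (2 : R) != 1 by rewrite pnatr_eq1.
by have [_ [_ ->] _ _ _] := haxis (ltr0Sn _ 1) two_neq1.
Qed.

Lemma L_mul l b l' b' l'' b'' : 0 < l -> 0 < l' -> l'' = l * l' -> b'' = l * b' + b / l' ->
  forall v, L l'' b'' v = L l b (L l' b' v).
Proof.
move=> l_gt0 l'_gt0 -> ->; apply: hLhom; rewrite ?mulr_gt0 //.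
by rewrite gP_mul ?lt0r_neq0.
Qed.

Lemma L_id v : L 1 0 v = v.
Proof.
have [_ /bij_inj L10_inj _] := hLU 0 ltr01; apply: L10_inj.
by rewrite -(@L_mul 1 0 1 0 1 0) ?mulr1 // mulr0 mul0r addr0.
Qed.

Definition kappa l b := B (L l b eta1) eta2.

Lemma L_eta1_kappa l b : 0 < l -> L l b eta1 = kappa l b *: eta1.
Proof.
move=> l_gt0; have [mu _ Lmu] := hLlift b l_gt0; have [nu rho_eta1] := hfix1 b l_gt0.
by rewrite /kappa Lmu rho_eta1 scalerA (hermZl hB) B12 mulr1.
Qed.

Lemma kappa_mul l b l' b' l'' b'' : 0 < l -> 0 < l' ->
  l'' = l * l' -> b'' = l * b' + b / l' -> kappa l'' b'' = kappa l' b' * kappa l b.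
Proof.
move=> l_gt0 l'_gt0 l''E b''E; rewrite {1}/kappa (L_mul l_gt0 l'_gt0 l''E b''E).
by rewrite [L l' b' _]L_eta1_kappa // (unitaryZ (hLU b l_gt0)) (hermZl hB).
Qed.

(* g(sqrt 2,0) g(1,b) = g(1,2b) g(sqrt 2,0) gives kappa(1,2b) = kappa(1,b) = kappa(1,b)^2. *)
Lemma kappa_unipotent b : kappa 1 b = 1.
Proof.
set s := Num.sqrt (2 : R); have s_gt0 : 0 < s by rewrite sqrtr_gt0.
have ss : s * s = 2 by rewrite -expr2 sqr_sqrtr.
have k2b : kappa 1 (2 * b) = kappa 1 b * kappa 1 b.
  by apply: kappa_mul; rewrite ?mulr1 // mul1r divr1 mulr2n mulrDl mul1r.
have conj2b : kappa 1 b * kappa s 0 = kappa s 0 * kappa 1 (2 * b).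
  rewrite -(@kappa_mul s 0 1 b s (s * b)) ?mulr1 ?mul0r ?addr0 //.
  by apply: kappa_mul; rewrite ?mul1r // add0r -ss; field; apply: lt0r_neq0.
have kappa_2b : kappa 1 (2 * b) = kappa 1 b.
  by apply: (mulfI (lt0r_neq0 (hLnorm 0 s_gt0))); rewrite -conj2b mulrC.
by apply: (mulfI (lt0r_neq0 (hLnorm b ltr01))); rewrite mulr1 -k2b kappa_2b.
Qed.

Definition chi l := complex.Re (kappa l 0).

Lemma kappa_chi l b : 0 < l -> kappa l b = (chi l)%:C.
Proof.
move=> l_gt0; rewrite (@kappa_mul l 0 1 (b / l) l b) ?kappa_unipotent ?mul1r ?mulr1 //.
  by rewrite /chi RRe_real // gtr0_real // hLnorm.
by rewrite mul0r addr0 mulrC divfK ?lt0r_neq0.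
Qed.

Lemma L_eta1 l b : 0 < l -> L l b eta1 = (chi l)%:C *: eta1.
Proof. by move=> l_gt0; rewrite L_eta1_kappa // kappa_chi. Qed.

Lemma chi_gt0 l : 0 < l -> 0 < chi l.
Proof. by move=> l_gt0; rewrite -ltcR -(kappa_chi 0 l_gt0) hLnorm. Qed.

Lemma chi1 : chi 1 = 1.
Proof. by rewrite /chi kappa_unipotent. Qed.

Lemma chi_mul x y : 0 < x -> 0 < y -> chi (x * y) = chi x * chi y.
Proof.
move=> x_gt0 y_gt0; apply: complexI; rewrite rmorphM /= -!(kappa_chi 0) ?mulr_gt0 //.
by rewrite (@kappa_mul x 0 y 0 (x * y) 0) ?mulr0 ?mul0r ?addr0 // mulrC.
Qed.

Lemma chi_neq1 l : 0 < l -> l != 1 -> chi l != 1.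
Proof.
move=> l_gt0 l_neq1; have [_ _ _ _ [a rho_eta1 a_neq1]] := haxis l_gt0 l_neq1.
have [mu mu1 Lmu] := hLlift 0 l_gt0.
have : cabs (kappa l 0) = cabs a.
  by rewrite /kappa Lmu rho_eta1 scalerA (hermZl hB) B12 mulr1 cabsM mu1 mul1r.
rewrite kappa_chi // => chi_a; apply: contra a_neq1 => /eqP chi_l1.
by rewrite -chi_a chi_l1 cabs1.
Qed.

Lemma chi_inj x y : 0 < x -> 0 < y -> chi x = chi y -> x = y.
Proof.
move=> x_gt0 y_gt0 chixy; have xy_gt0 : 0 < x / y by rewrite divr_gt0.
have chi_xy : chi (x / y) = 1.
  apply: (mulIf (lt0r_neq0 (chi_gt0 y_gt0))).
  by rewrite mul1r -chi_mul // divfK ?lt0r_neq0.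
have [xy1|xy_neq1] := eqVneq (x / y) 1.
  by rewrite -[x](divfK (lt0r_neq0 y_gt0)) xy1 mul1r.
by move: (chi_neq1 xy_gt0 xy_neq1); rewrite chi_xy eqxx.
Qed.

Lemma Bee : B e e = 1.
Proof. by case: hsig. Qed.

Lemma Bneg w : B w e = 0 -> w <> 0 -> sqB B w < 0.
Proof. by case: hsig => _ + _ _ _; apply. Qed.

Lemma chi_cont : cont_pos chi.
Proof.
move=> l0 l0_gt0 eps eps_gt0.
have kappa_cont : contP_R (fun l b => complex.Re (kappa l b)).
  exact (contP_Re_herm hB Bee Bneg eta2 (hLcont eta1)).
have [d d_gt0 near] := kappa_cont l0 0 l0_gt0 eps eps_gt0.
by exists d => // l l_gt0 near_l; apply: near; rewrite // subrr normr0.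
Qed.

Lemma chi_cont_iso_pos : cont_iso_pos chi.
Proof.
have two_neq1 : (2 : R) != 1 by rewrite pnatr_eq1.
split; [exact: chi_gt0 | exact: chi_mul | exact: chi_inj | | exact: chi_cont].
exact: cont_pos_hom_onto chi_gt0 chi_mul chi_cont 2 (ltr0Sn _ 1) (chi_neq1 _ two_neq1).
Qed.

Local Notation orthE := (orthE B eta1 eta2).
Local Notation projE := (projE B eta1 eta2).

Definition cE l b := projE (L l b eta2).
Definition alpha l b := B (L l b eta2) eta2.
Definition Delta l b := complex.Im (alpha l b).
Definition pi_rep l b u := projE (L l b u).

Lemma projE_orth v : orthE (projE v).
Proof. exact: projE_orthE hB B11 B22 B12 v. Qed.

Lemma herm_decomp12 v w : B v w =
  B v eta2 * conjc (B w eta1) + B v eta1 * conjc (B w eta2) + B (projE v) (projE w).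
Proof. exact (herm_decomp hB B11 B22 B12 v w). Qed.

Lemma chiC_neq0 l : 0 < l -> (chi l)%:C != 0.
Proof.
by move=> l_gt0; apply/eqP => -[chi0]; move: (chi_gt0 l_gt0); rewrite chi0 ltxx.
Qed.

Lemma L_eta2_eta1 l b : 0 < l -> B (L l b eta2) eta1 = ((chi l)^-1)%:C.
Proof.
move=> l_gt0; have := unitary_herm (hLU b l_gt0) eta2 eta1.
rewrite L_eta1 // (hermZr hB) conjc_real (B21 hB B12) fmorphV => chi_B.
by apply: (mulfI (chiC_neq0 l_gt0)); rewrite chi_B divff ?chiC_neq0.
Qed.

Lemma L_orthE_eta1 l b u : 0 < l -> orthE u -> B (L l b u) eta1 = 0.
Proof.
move=> l_gt0 [u1 _]; have := unitary_herm (hLU b l_gt0) u eta1.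
rewrite L_eta1 // (hermZr hB) conjc_real u1 => /eqP.
by rewrite mulf_eq0 (negPf (chiC_neq0 l_gt0)) => /eqP.
Qed.

Lemma Re_alpha l b : 0 < l -> complex.Re (alpha l b) = - (chi l * sqB B (cE l b)) / 2.
Proof.
move=> l_gt0; have := unitary_herm (hLU b l_gt0) eta2 eta2.
rewrite B22 herm_decomp12 L_eta2_eta1 // conjc_real -/(alpha l b) -/(cE l b).
move=> /(congr1 (@complex.Re R)); rewrite !raddfD /= (mulrC (alpha l b)) !Re_realM.
rewrite Re_conjc -/(sqB B _) => isotropic_L_eta2.
have chi_Re : (chi l)^-1 * complex.Re (alpha l b) = - sqB B (cE l b) / 2 by lra.
by rewrite -[complex.Re _](mulVKf (lt0r_neq0 (chi_gt0 l_gt0))) chi_Re mulrA mulrN.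
Qed.

Lemma L_eta2 l b : 0 < l -> L l b eta2 =
  ((- (chi l * sqB B (cE l b)) / 2)%:C + iC * (Delta l b)%:C) *: eta1
  + ((chi l)^-1)%:C *: eta2 + cE l b.
Proof.
move=> l_gt0; rewrite {1}[L l b eta2](vec_decomp B eta1 eta2) L_eta2_eta1 // -/(alpha l b).
by rewrite {1}[alpha l b]complexE Re_alpha.
Qed.

Lemma L_orthE l b u : 0 < l -> orthE u ->
  L l b u = (- (chi l)%:C * B (pi_rep l b u) (cE l b)) *: eta1 + pi_rep l b u.
Proof.
move=> l_gt0 Eu; rewrite {1}[L l b u](vec_decomp B eta1 eta2) L_orthE_eta1 //.
rewrite scale0r addr0 -/(pi_rep l b u); congr (_ *: _ + _).
have := unitary_herm (hLU b l_gt0) u eta2; rewrite Eu.2 herm_decomp12.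
rewrite L_eta2_eta1 // L_orthE_eta1 // mul0r addr0 conjc_real fmorphV.
rewrite -/(pi_rep l b u) -/(cE l b).
move=> /= /eqP; rewrite addr_eq0 => /eqP Lu_eta2.
by rewrite -[B (L l b u) eta2](divfK (chiC_neq0 l_gt0)) Lu_eta2; ring.
Qed.

Lemma pi_rep_herm l b u v : 0 < l -> orthE u -> orthE v ->
  B (pi_rep l b u) (pi_rep l b v) = B u v.
Proof.
move=> l_gt0 Eu Ev; rewrite -(unitary_herm (hLU b l_gt0) u v) (herm_decomp12 (L l b u)).
by rewrite !L_orthE_eta1 // rmorph0 mulr0 mul0r !add0r.
Qed.

Lemma pi_rep_unitary l b : 0 < l -> unitaryB_on B orthE (pi_rep l b).
Proof.
move=> l_gt0; have L_U := hLU b l_gt0; split=> [u _|a u v _ _|u v Eu Ev|v Ev].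
- exact: projE_orth.
- by rewrite /pi_rep (unitaryD L_U) (unitaryZ L_U) (projED _ _ hB) (projEZ _ _ hB).
- exact: pi_rep_herm.
have [_ [Linv _ LinvK] _] := L_U.
exists (projE (Linv v)); first exact: projE_orth.
have Linv_eta1 : B (Linv v) eta1 = 0.
  by rewrite -(unitary_herm L_U) LinvK L_eta1 // (hermZr hB) Ev.1 mulr0.
have -> : projE (Linv v) = Linv v - B (Linv v) eta2 *: eta1.
  by rewrite /projE Linv_eta1 scale0r subr0.
rewrite /pi_rep (unitaryD L_U) (unitaryN L_U) (unitaryZ L_U) LinvK L_eta1 //.
rewrite (projED _ _ hB) (projEN _ _ hB) !(projEZ _ _ hB) (projE_eta1 B11 B12).
by rewrite !scaler0 subr0 (projE_id Ev).
Qed.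

Lemma pi_rep_mul l b l' b' l'' b'' : 0 < l -> 0 < l' -> 0 < l'' ->
  gP l b *m gP l' b' = gP l'' b'' ->
  forall u, orthE u -> pi_rep l'' b'' u = pi_rep l b (pi_rep l' b' u).
Proof.
move=> l_gt0 l'_gt0 l''_gt0 gP_eq u Eu; have L_U := hLU b l_gt0.
rewrite {1}/pi_rep (hLhom l_gt0 l'_gt0 l''_gt0 gP_eq) (L_orthE b' l'_gt0 Eu).
rewrite (unitaryD L_U) (unitaryZ L_U) L_eta1 // (projED _ _ hB) !(projEZ _ _ hB).
by rewrite (projE_eta1 B11 B12) !scaler0 add0r.
Qed.

Lemma cE_mul l b l' b' l'' b'' :
  0 < l -> 0 < l' -> l'' = l * l' -> b'' = l * b' + b / l' ->
  cE l'' b'' = ((chi l')^-1)%:C *: cE l b + pi_rep l b (cE l' b').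
Proof.
move=> l_gt0 l'_gt0 l''E b''E; have L_U := hLU b l_gt0.
rewrite {1}/cE (L_mul l_gt0 l'_gt0 l''E b''E) [L l' b' eta2](vec_decomp B eta1 eta2).
rewrite L_eta2_eta1 // -/(cE l' b'); move: (cE l' b') => cE'.
rewrite !(unitaryD L_U) !(unitaryZ L_U) L_eta1 //.
by rewrite !(projED _ _ hB) !(projEZ _ _ hB) (projE_eta1 B11 B12) !scaler0 add0r.
Qed.

Lemma alpha_mul l b l' b' l'' b'' :
  0 < l -> 0 < l' -> l'' = l * l' -> b'' = l * b' + b / l' ->
  alpha l'' b'' = alpha l' b' * (chi l)%:C + ((chi l')^-1)%:C * alpha l b
                  - (chi l)%:C * B (pi_rep l b (cE l' b')) (cE l b).
Proof.
move=> l_gt0 l'_gt0 l''E b''E; have L_U := hLU b l_gt0.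
rewrite {1}/alpha (L_mul l_gt0 l'_gt0 l''E b''E) [L l' b' eta2](vec_decomp B eta1 eta2).
rewrite L_eta2_eta1 // -/(cE l' b') -/(alpha l' b').
have L_c' := L_orthE b l_gt0 (projE_orth (L l' b' eta2)); rewrite -/(cE l' b') in L_c'.
have pi_c'_eta2 : B (pi_rep l b (cE l' b')) eta2 = 0 := (projE_orth _).2.
move: (cE l' b') (pi_rep l b (cE l' b')) L_c' pi_c'_eta2 => cE' pi_c' L_c' pi_c'_eta2.
rewrite !(unitaryD L_U) !(unitaryZ L_U) L_eta1 // L_c'.
by rewrite !(hermDl hB) !(hermZl hB) B12 pi_c'_eta2 -/(alpha l b); ring.
Qed.

Lemma L_eta2_axis l : 0 < l -> exists mu, L l 0 eta2 = mu *: eta2.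
Proof.
move=> l_gt0; have [->|l_neq1] := eqVneq l 1; first by exists 1; rewrite L_id scale1r.
have [_ _ _ [nu rho_eta2] _] := haxis l_gt0 l_neq1; have [mu _ Lmu] := hLlift 0 l_gt0.
by exists (mu * nu); rewrite Lmu rho_eta2 scalerA.
Qed.

Lemma cE_l0 l : 0 < l -> cE l 0 = 0.
Proof.
move=> l_gt0; have [mu Lmu] := L_eta2_axis l_gt0.
by rewrite /cE Lmu (projEZ _ _ hB) (projE_eta2 hB B22 B12) scaler0.
Qed.

Lemma alpha_l0 l : 0 < l -> alpha l 0 = 0.
Proof.
by move=> l_gt0; have [mu Lmu] := L_eta2_axis l_gt0; rewrite /alpha Lmu (hermZl hB) B22 mulr0.
Qed.

Lemma projE_bounded :
  exists2 K, 0 < K & forall x, norm2 B e (projE x) <= K * norm2 B e x.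
Proof.
have [K1 K1_gt0 B_eta1_bd] := herm_bounded hB Bee Bneg eta1.
have [K2 K2_gt0 B_eta2_bd] := herm_bounded hB Bee Bneg eta2.
have N1 := norm2_ge0 hB Bee Bneg eta1; have N2 := norm2_ge0 hB Bee Bneg eta2.
exists (4 + 4 * K2 * norm2 B e eta1 + 2 * K1 * norm2 B e eta2) => [|x]; first nra.
have Nx := norm2_ge0 hB Bee Bneg x.
have NB := norm2B_le hB Bee Bneg; have NZ := norm2Z e hB.
have := NB (x - B x eta2 *: eta1) (B x eta1 *: eta2); have := NB x (B x eta2 *: eta1).
rewrite !NZ; have := B_eta1_bd x; have := B_eta2_bd x.
have := sqr_ge0 (cabs (B x eta1)); have := sqr_ge0 (cabs (B x eta2)).
by rewrite /(projE _); nra.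
Qed.

Lemma contP_projE f : contP_V B e f -> contP_V B e (fun l b => projE (f l b)).
Proof.
move=> f_cont; have [K K_gt0 projE_bd] := projE_bounded.
apply: (contP_V_lipschitz (T := projE) K_gt0 _ f_cont) => x y.
by rewrite -(projEN _ _ hB) -(projED _ _ hB) projE_bd.
Qed.

Lemma cE_cont : contP_V B e cE.
Proof. exact: contP_projE (hLcont eta2). Qed.

Lemma pi_rep_cont u : contP_V B e (fun l b => pi_rep l b u).
Proof. exact: contP_projE (hLcont u). Qed.

Lemma Delta_cont : contP_R Delta.
Proof. exact (contP_Im_herm hB Bee Bneg eta2 (hLcont eta2)). Qed.

Lemma cE_cocycle b d : cE 1 (b + d) = cE 1 b + pi_rep 1 b (cE 1 d).
Proof.
rewrite (@cE_mul 1 b 1 d 1 (b + d)) ?mulr1 //; last by rewrite mul1r divr1 addrC.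
by rewrite chi1 invr1 rmorph1 scale1r.
Qed.

Lemma Delta_l0 l : 0 < l -> Delta l 0 = 0.
Proof. by move=> l_gt0; rewrite /Delta alpha_l0. Qed.

Lemma pi_rep0 l b : 0 < l -> pi_rep l b 0 = 0.
Proof. by move=> l_gt0; rewrite /pi_rep (unitary0 (hLU b l_gt0)) (projE0 _ _ hB). Qed.

(* Both sides come from the E-component of L(l,l b) eta2, using g(l,l b) = g(l,0) g(1,b)
   = g(1,l^2 b) g(l,0); the same factorizations give alpha_dilation. *)
Lemma cE_dilation l b : 0 < l -> (chi l)%:C *: pi_rep l 0 (cE 1 b) = cE 1 (l ^+ 2 * b).
Proof.
move=> l_gt0; have lb : l * b = 1 * 0 + l ^+ 2 * b / l.
  by rewrite mul1r add0r; field; exact: lt0r_neq0.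
have := @cE_mul 1 (l ^+ 2 * b) l 0 l (l * b) ltr01 l_gt0 (esym (mul1r l)) lb.
rewrite (@cE_mul l 0 1 b l (l * b)) ?mulr1 ?mul0r ?addr0 // cE_l0 // pi_rep0 // addr0.
rewrite scaler0 add0r => ->.
by rewrite scalerA -rmorphM divff ?lt0r_neq0 ?chi_gt0 // rmorph1 scale1r.
Qed.

Lemma alpha_dilation l b : 0 < l -> alpha 1 (l ^+ 2 * b) = (chi l ^+ 2)%:C * alpha 1 b.
Proof.
move=> l_gt0; have lb : l * b = 1 * 0 + l ^+ 2 * b / l.
  by rewrite mul1r add0r; field; exact: lt0r_neq0.
have := @alpha_mul 1 (l ^+ 2 * b) l 0 l (l * b) ltr01 l_gt0 (esym (mul1r l)) lb.
rewrite (@alpha_mul l 0 1 b l (l * b)) ?mulr1 ?mul0r ?addr0 //.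
rewrite !alpha_l0 // !cE_l0 // pi_rep0 // !(herm0r hB) (herm0l hB) chi1 !mulr0 !subr0 mul0r.
rewrite addr0 add0r fmorphV /= => alpha_lb.
by rewrite -[alpha 1 _](mulVKf (chiC_neq0 l_gt0)) -alpha_lb rmorphXn /=; ring.
Qed.

Lemma Delta_dilation l b : 0 < l -> chi l ^+ 2 * Delta 1 b = Delta 1 (l ^+ 2 * b).
Proof. by move=> l_gt0; rewrite /Delta alpha_dilation // Im_realM. Qed.

Lemma herm_diag_real v : B v v = (sqB B v)%:C.
Proof. by rewrite {1}[B v v]complexE (Im_herm_diag hB) mulr0 addr0. Qed.

(* From g(1,d) = g(1,b) g(1,d-b): combine the alpha- and cE-cocycle relations. *)
Lemma herm_cE_cE b d :
  B (cE 1 d) (cE 1 b) = alpha 1 (d - b) - alpha 1 d + alpha 1 b + (sqB B (cE 1 b))%:C.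
Proof.
have d_eq : d = 1 * (d - b) + b / 1 by rewrite mul1r divr1 subrK.
have := @alpha_mul 1 b 1 (d - b) 1 d ltr01 ltr01 (esym (mulr1 1)) d_eq.
rewrite chi1 invr1 rmorph1 !mul1r mulr1 => alpha_d.
have cE_d : cE 1 d = cE 1 b + pi_rep 1 b (cE 1 (d - b)) by rewrite -cE_cocycle addrC subrK.
by rewrite cE_d (hermDl hB) herm_diag_real alpha_d; ring.
Qed.

Lemma Im_herm_cE b d :
  complex.Im (B (cE 1 d) (cE 1 b)) = Delta 1 (d - b) - Delta 1 d + Delta 1 b.
Proof. by rewrite herm_cE_cE !raddfD raddfN /= addr0. Qed.

Lemma Delta_odd b : Delta 1 (- b) = - Delta 1 b.
Proof.
have := Im_herm_cE b 0; rewrite cE_l0 // (herm0l hB) Delta_l0 // sub0r subr0.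
by move=> /esym/eqP; rewrite addr_eq0 => /eqP.
Qed.

Lemma Re_herm_cE b d : complex.Re (B (cE 1 d) (cE 1 b)) =
  - sqB B (cE 1 (d - b)) / 2 + sqB B (cE 1 b) / 2 + sqB B (cE 1 d) / 2.
Proof.
by rewrite herm_cE_cE !raddfD raddfN /= !Re_alpha // chi1 !mul1r; lra.
Qed.

End LiftOfP.

Theorem mainTheorem8
  (R : realType) (V : lmodType R[i]) (B : V -> V -> R[i]) (e : V)
  (hB : hermitian_form B) (hsig : strongly_nondeg_sig_1_inf B e)
  (rho : 'M[R[i]]_2 -> V -> V)
  (hrho : proj_rep B rho) (hirr : irreducible_rep B e rho)
  (eta1 eta2 : V)
  (* eta1: the unique boundary point fixed by rho(P) *)
  (heta1 : isotropic B eta1)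
  (hfix1 : forall l b : R, 0 < l -> same_line (rho (gP l b) eta1) eta1)
  (huniq1 : forall x, isotropic B x ->
       (forall l b : R, 0 < l -> same_line (rho (gP l b) x) x) -> same_line x eta1)
  (* eta2: the other endpoint of the common axis of rho(g(lambda,0)), lambda <> 1 *)
  (haxis : forall l : R, 0 < l -> l != 1 -> hyperbolic_axis B (rho (gP l 0)) eta1 eta2)
  (hnorm12 : B eta1 eta2 = 1)
  (* continuous homomorphic lift rho : P -> U(B), normalized *)
  (L : R -> R -> V -> V)
  (hLU : forall l b : R, 0 < l -> unitaryB B (L l b))
  (hLhom : forall l b l' b' l'' b'' : R, 0 < l -> 0 < l' -> 0 < l'' ->
       gP l b *m gP l' b' = gP l'' b'' ->
       forall v, L l'' b'' v = L l b (L l' b' v))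
  (hLlift : forall l b : R, 0 < l -> exists2 mu : R[i], cabs mu = 1 &
       forall v, L l b v = mu *: rho (gP l b) v)
  (hLcont : forall v, contP_V B e (fun l b => L l b v))
  (hLnorm : forall l b : R, 0 < l -> 0 < B (L l b eta1) eta2) :
  let E := fun u : V => B u eta1 = 0 /\ B u eta2 = 0 in
  exists chi : R -> R, cont_iso_pos chi /\
  exists (Delta : R -> R -> R) (c : R -> R -> V) (pi : R -> R -> V -> V),
    (* the matrix of rho(g(lambda,b)) w.r.t. C eta1 (+) C eta2 (+) E *)
    (forall l b : R, 0 < l ->
       [/\ L l b eta1 = (chi l)%:C *: eta1,
           L l b eta2 = ((- (chi l * sqB B (c l b)) / 2)%:C + iC * (Delta l b)%:C) *: eta1
                        + ((chi l)^-1)%:C *: eta2 + c l b &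
           forall u, E u ->
             L l b u = (- (chi l)%:C * B (pi l b u) (c l b)) *: eta1 + pi l b u]) /\
    (* (1) *)
    contP_R Delta /\
    (* (2) *)
    (forall l b : R, 0 < l -> E (c l b)) /\ contP_V B e c /\
    (* (3) *)
    (forall l b : R, 0 < l -> unitaryB_on B E (pi l b)) /\
    (forall l b l' b' l'' b'' : R, 0 < l -> 0 < l' -> 0 < l'' ->
       gP l b *m gP l' b' = gP l'' b'' ->
       forall u, E u -> pi l'' b'' u = pi l b (pi l' b' u)) /\
    (forall u, E u -> contP_V B e (fun l b => pi l b u)) /\
    (forall (l : R) (b d : R), 0 < l ->
       (* (4) *) c 1 (b + d) = c 1 b + pi 1 b (c 1 d) /\
           (* (5) *) Delta l 0 = 0 /\ c l 0 = 0 /\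
           (* (6) *) (chi l)%:C *: pi l 0 (c 1 b) = c 1 (l ^+ 2 * b) /\
           (* (7) *) chi l ^+ 2 * Delta 1 b = Delta 1 (l ^+ 2 * b) /\
           (* (8) *) Delta 1 (- b) = - Delta 1 b /\
           (* (9) *) complex.Im (B (c 1 d) (c 1 b)) = Delta 1 (d - b) - Delta 1 d + Delta 1 b /\
           (* (10) *) complex.Re (B (c 1 d) (c 1 b)) =
                 - sqB B (c 1 (d - b)) / 2 + sqB B (c 1 b) / 2 + sqB B (c 1 d) / 2).
Proof.
(* hrho, hirr and huniq1 only serve to produce eta1, eta2 and L, which are given here. *)
move=> E; exists (chi B eta1 eta2 L); split; first by apply: chi_cont_iso_pos; eassumption.
exists (Delta B eta2 L), (cE B eta1 eta2 L), (pi_rep B eta1 eta2 L).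
split.
  move=> l b l_gt0.
  by split; [apply: L_eta1 | apply: L_eta2 | move=> u Eu; apply: L_orthE]; eassumption.
split; first by apply: Delta_cont; eassumption.
split; first by move=> l b _; apply: projE_orth; eassumption.
split; first by apply: cE_cont; eassumption.
split; first by move=> l b l_gt0; apply: pi_rep_unitary; eassumption.
split; first by move=> l b l' b' l'' b''; apply: pi_rep_mul; eassumption.
split; first by move=> u _; apply: pi_rep_cont; eassumption.
move=> l b d l_gt0; split; first by apply: cE_cocycle; eassumption.
split; first by apply: Delta_l0; eassumption.
split; first by apply: cE_l0; eassumption.
split; first by apply: cE_dilation; eassumption.
split; first by apply: Delta_dilation; eassumption.
split; first by apply: Delta_odd; eassumption.
by split; [apply: Im_herm_cE | apply: Re_herm_cE]; eassumption.
Qed.
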